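(* For all $n,k\ge0$, $$[x^ny^k]\,\frac{1}{x}\,\mathrm{Rev}\left(\frac{x(1-yx)}{1+rx+sx^2}\right)=\sum_{j=k}^n\binom{j}{k}\binom{n+k}{2j}s^{\,j-k}r^{\,n+k-2j}C_j,$$ where $C_j=\frac{1}{j+1}\binom{2j}{j}$ (only terms with $2j\le n+k$ contribute).
   Context: $\mathrm{Rev}$ denotes compositional inverse with respect to $x$. *)

From HB Require Import structures.
From mathcomp Require Import all_boot all_order all_algebra.
Set Implicit Arguments. Unset Strict Implicit. Unset Printing Implicit Defensive.
Import Order.TTheory GRing.Theory Num.Theory.
Local Open Scope ring_scope.

(* Formal power series in x with coefficients in a commutative ring A,
   represented by their coefficient sequence: a n = [x^n] a. *)
Definition fps (A : Type) := nat -> A.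

Section FPS.
Variable A : comNzRingType.

Definition fps_mul (a b : fps A) : fps A :=
  fun n => \sum_(i < n.+1) a i * b (n - i)%N.

Definition fps_one : fps A := fun n => if n == 0%N then 1 else 0.

Definition fps_X : fps A := fun n => if n == 1%N then 1 else 0.

Fixpoint fps_exp (a : fps A) (m : nat) : fps A :=
  if m is m'.+1 then fps_mul a (fps_exp a m') else fps_one.

(* composition f(g(x)), meaningful when g 0 = 0:
   [x^n] f(g) = sum_{m <= n} f_m [x^n] g^m *)
Definition fps_comp (f g : fps A) : fps A :=
  fun n => \sum_(m < n.+1) f m * fps_exp g m n.

Definition is_rev (f g : fps A) : Prop :=
  g 0%N = 0 /\ fps_comp f g = fps_X.

End FPS.

(* Catalan numbers C_j = binom(2j, j)/(j+1) (exact division) *)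
Definition catalan (j : nat) : nat := 'C(j.*2, j) %/ j.+1.

From HB Require Import structures.
From mathcomp Require Import all_boot all_order all_algebra.
From mathcomp Require Import zify ring.
From Stdlib Require Import FunctionalExtensionality.
Import Order.TTheory GRing.Theory Num.Theory.

Set Implicit Arguments.
Unset Strict Implicit.
Unset Printing Implicit Defensive.

(* Composing F (1 + r x + s x^2) = x - y x^2 with a series G without constant
   term shows that G is a reverse of F iff G - y G^2 = x (1 + r G + s G^2), an
   equation that determines the coefficients of G one by one.  Writing G = x A,
   it reads A = 1 + r x A + (s x^2 + y x) A^2, which is solved by
   A = C(u) / (1 - r x) with u = x (s x + y) / (1 - r x)^2 and C = 1 + x C^2 the
   Catalan series.  Expanding C(u) = sum_j C_j u^j together with (s x + y)^j and
   (1 - r x)^-(2j+1) gives the formula.  All identities between series are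
   checked on truncations, as polynomials modulo x^N. *)

(* [ballot n m] is [x^n] C(x)^m for the Catalan series C = 1 + x C^2; the
   recursion comes from C^(m+1) = C^m + x C^(m+2). *)
Fixpoint ballot (n : nat) : nat -> nat :=
  if n is n'.+1 then
    fix ballot_n m := if m is m'.+1 then ballot_n m' + ballot n' m.+1 else 0
  else fun=> 1.

Lemma ballot0 m : ballot 0 m = 1. Proof. by []. Qed.
Lemma ballotS0 n : ballot n.+1 0 = 0. Proof. by []. Qed.
Lemma ballotSS n m : ballot n.+1 m.+1 = ballot n.+1 m + ballot n m.+2.
Proof. by []. Qed.
Lemma ballotn0 n : ballot n 0 = (n == 0). Proof. by case: n. Qed.
Arguments ballot : simpl never.

Lemma ballot_bin n m : ballot n m * (n.*2 + m) = m * 'C(n.*2 + m, n).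
Proof.
elim: n m => [|n IHn] m; first by rewrite ballot0 bin0 mul1n muln1.
elim: m => [|m IHm]; first by rewrite ballotS0.
have -> : (n.+1).*2 + m.+1 = (n.*2 + m.+2).+1 by rewrite doubleS; lia.
rewrite (_ : (n.+1).*2 + m = n.*2 + m.+2) in IHm; last by rewrite doubleS; lia.
move: IHm (IHn m.+2) (mul_bin_left (n.*2 + m.+2) n).
rewrite ballotSS binS.
set K := n.*2 + m.+2; set c0 := 'C(K, n); set c1 := 'C(K, n.+1).
have -> : K - n = n + m.+2 by rewrite /K -addnn -addnA addKn.
move=> IH1 IH2 Hc; have Kn_gt0 : 0 < K * n.+1 by rewrite muln_gt0 /K addnS.
apply/eqP; rewrite -(eqn_pmul2l Kn_gt0); apply/eqP.
transitivity (n.+1 * (ballot n.+1 m * K + ballot n m.+2 * K) * K.+1).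
  by ring.
rewrite IH1 IH2; transitivity ((m * (n.+1 * c1) + n.+1 * m.+2 * c0) * K.+1).
  by ring.
transitivity (K * m.+1 * (n.+1 * c1 + n.+1 * c0)); last by ring.
by rewrite Hc /K -addnn; ring.
Qed.

Lemma ballot_conv n a b :
  \sum_(i < n.+1) ballot i a * ballot (n - i) b = ballot n (a + b).
Proof.
elim: n a b => [|n IHn] a b; first by rewrite big_ord_recl big_ord0 !ballot0.
elim: a => [|a IHa].
  by rewrite big_ord_recl ballotn0 mul1n subn0 big1 ?addn0.
rewrite big_ord_recl ballot0 mul1n subn0 addSn ballotSS -IHa.
rewrite -[(a + b).+2]/(a.+2 + b) -IHn [X in _ = X + _]big_ord_recl ballot0.
rewrite mul1n subn0 -addnA -big_split; congr (_ + _).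
by apply: eq_bigr => i _; rewrite lift0 ballotSS mulnDl subSS.
Qed.

Lemma catalan_ballot n : catalan n = ballot n 1.
Proof.
have sym : 'C(n.*2.+1, n.+1) = 'C(n.*2.+1, n).
  rewrite -(@bin_sub _ n.+1); last by rewrite -addnn; lia.
  by congr 'C(_, _); rewrite -addnn; lia.
have := ballot_bin n 1; rewrite addn1 mul1n => Hb.
have E : 'C(n.*2, n) = ballot n 1 * n.+1.
  apply/eqP; rewrite -(eqn_pmul2l (ltn0Sn n.*2)); apply/eqP.
  by rewrite (mul_bin_diag n.*2.+1) sym -Hb; ring.
by rewrite /catalan E mulnK.
Qed.

Lemma catalanS n : catalan n.+1 = \sum_(i < n.+1) catalan i * catalan (n - i).
Proof.
rewrite catalan_ballot ballotSS ballotS0 -[2]/(1 + 1) -ballot_conv.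
by apply: eq_bigr => i _; rewrite !catalan_ballot.
Qed.

Local Open Scope ring_scope.

Definition eqmodX {R : nzRingType} N (p q : {poly R}) :=
  forall i, (i < N)%N -> p`_i = q`_i.

Notation "p = q %[modX N ]" := (eqmodX N p q)
  (at level 70, q at next level, format "p  =  q  %[modX  N ]").

Lemma coef_expr_small (R : nzRingType) (p : {poly R}) m i :
  p`_0 = 0 -> (i < m)%N -> (p ^+ m)`_i = 0.
Proof.
move=> p0; elim: m i => [|m IHm] i //= lt_im.
rewrite exprS coefM big1 // => -[[|j] lt_ji] _ /=; first by rewrite p0 mul0r.
by rewrite IHm ?mulr0 //; lia.
Qed.

Lemma coef_mul_small (R : nzRingType) n (f g : {poly R}) :
  (forall j, (j < n)%N -> f`_j = 0) -> g`_0 = 0 ->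
  forall i, (i <= n)%N -> (f * g)`_i = 0.
Proof.
move=> f_small g0 i le_in; rewrite coefM big1 // => j _.
have [lt_jn|le_nj] := ltnP j n; first by rewrite f_small ?mul0r.
by rewrite (_ : i - j = 0)%N ?g0 ?mulr0 //; lia.
Qed.

Section TruncatedEquality.
Variables (R : nzRingType) (N : nat).
Implicit Types p q u v : {poly R}.

Lemma eqmodX_refl p : p = p %[modX N].
Proof. by []. Qed.

Lemma eqmodX_eq p q : p = q -> p = q %[modX N].
Proof. by move->. Qed.

Lemma eqmodX_sym p q : p = q %[modX N] -> q = p %[modX N].
Proof. by move=> Epq i lt_iN; rewrite Epq. Qed.

Lemma eqmodX_trans p q u :
  p = q %[modX N] -> q = u %[modX N] -> p = u %[modX N].
Proof. by move=> Epq Equ i lt_iN; rewrite Epq ?Equ. Qed.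

Lemma eqmodXD p q u v :
  p = q %[modX N] -> u = v %[modX N] -> p + u = q + v %[modX N].
Proof. by move=> Epq Euv i lt_iN; rewrite !coefD Epq ?Euv. Qed.

Lemma eqmodXB p q u v :
  p = q %[modX N] -> u = v %[modX N] -> p - u = q - v %[modX N].
Proof. by move=> Epq Euv i lt_iN; rewrite !coefB Epq ?Euv. Qed.

Lemma eqmodXM p q u v :
  p = q %[modX N] -> u = v %[modX N] -> p * u = q * v %[modX N].
Proof.
move=> Epq Euv i lt_iN; rewrite !coefM; apply: eq_bigr => j _.
have le_ji : (j <= i)%N by rewrite -ltnS.
by rewrite Epq ?Euv //; apply: leq_ltn_trans lt_iN; [apply: leq_subr|].
Qed.

Lemma eqmodXX p q m : p = q %[modX N] -> p ^+ m = q ^+ m %[modX N].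
Proof.
by move=> Epq; elim: m => [|m IHm]; rewrite ?expr0 // !exprS; apply: eqmodXM.
Qed.

Lemma eqmodX_mulX p q : p = q %[modX N] -> 'X * p = 'X * q %[modX N.+1].
Proof. by move=> Epq [|i] lt_iN; rewrite !coefXM //= Epq. Qed.

Lemma eqmodX_mulIr p q u :
  u`_0 = 1 -> p * u = q * u %[modX N] -> p = q %[modX N].
Proof.
move=> u0 Epq; suff dpq0 i : (i < N)%N -> (p - q)`_i = 0.
  by move=> i /dpq0 /eqP; rewrite coefB subr_eq0 => /eqP.
elim/ltn_ind: i => i IHi lt_iN.
have := Epq i lt_iN; move/eqP; rewrite -subr_eq0 -coefB -mulrBl.
rewrite coefM big_ord_recr /= subnn u0 mulr1 big1 ?add0r => [/eqP //|j _].
by rewrite IHi ?mul0r //; apply: ltn_trans lt_iN.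
Qed.

Lemma eqmodX_compr p q u : p = q %[modX N] -> u \Po p = u \Po q %[modX N].
Proof.
move=> Epq i lt_iN; rewrite !comp_polyE !coef_sum; apply: eq_bigr => j _.
by rewrite !coefZ (eqmodXX _ Epq).
Qed.

Lemma eqmodX_compl p q u :
  u`_0 = 0 -> p = q %[modX N] -> p \Po u = q \Po u %[modX N].
Proof.
move=> u0 Epq i lt_iN; apply/eqP; rewrite -subr_eq0 -coefB -linearB /=.
rewrite comp_polyE coef_sum; apply/eqP; apply: big1 => j _.
rewrite coefZ coefB; case: (ltnP j N) => lt_jN.
  by rewrite Epq // subrr mul0r.
by rewrite coef_expr_small ?mulr0 //; apply: leq_trans lt_jN.
Qed.

End TruncatedEquality.

Section Truncation.
Variable A : comNzRingType.
Implicit Types a b f g : fps A.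

Definition trunc N a : {poly A} := \poly_(i < N) a i.

Lemma coef_trunc N a i : (trunc N a)`_i = if (i < N)%N then a i else 0.
Proof. exact: coef_poly. Qed.

Lemma fps_mul_trunc N a b i :
  (i < N)%N -> fps_mul a b i = (trunc N a * trunc N b)`_i.
Proof.
move=> lt_iN; rewrite coefM; apply: eq_bigr => j _.
have le_ji : (j <= i)%N by rewrite -ltnS.
by rewrite !coef_trunc !(leq_ltn_trans _ lt_iN) ?leq_subr.
Qed.

Lemma fps_exp_trunc N a m i :
  (i < N)%N -> fps_exp a m i = (trunc N a ^+ m)`_i.
Proof.
elim: m i => [|m IHm] i lt_iN.
  by rewrite expr0 coef1 /= /fps_one; case: (i == 0%N).
rewrite /= (fps_mul_trunc _ _ lt_iN) exprS.
apply: (eqmodXM (eqmodX_refl _)) lt_iN => j lt_jN.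
by rewrite coef_trunc lt_jN IHm.
Qed.

Lemma fps_comp_trunc N f g i : g 0%N = 0 -> (i < N)%N ->
  fps_comp f g i = (trunc N f \Po trunc N g)`_i.
Proof.
move=> g0 lt_iN; rewrite [trunc N f]/trunc poly_def linear_sum coef_sum /=.
under eq_bigr do rewrite linearZ /= comp_Xn_poly coefZ.
rewrite /fps_comp (big_ord_widen N (fun j => f j * fps_exp g j i)) //.
rewrite big_mkcond; apply: eq_bigr => j _ /=.
case: ifP => [_|/negbT]; first by rewrite (fps_exp_trunc _ _ lt_iN).
rewrite -leqNgt => lt_ij; rewrite coef_expr_small ?mulr0 //.
by rewrite coef_trunc (leq_ltn_trans _ lt_iN).
Qed.

End Truncation.

Section Reversion.
Variables (S : comNzRingType) (r s y : S).
Implicit Types f g : {poly S}.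

Definition den_poly : {poly S} := 1 + r%:P * 'X + s%:P * 'X^2.
Definition num_poly : {poly S} := 'X - y%:P * 'X^2.

Lemma coef_den_poly i : den_poly`_i =
  if i == 0%N then 1 else if i == 1%N then r else if i == 2%N then s else 0.
Proof.
rewrite /den_poly !coefD coef1 (coefCM r) (coefCM s) coefX coefXn.
by case: i => [|[|[|i]]] /=; rewrite ?mulr0 ?mulr1 ?addr0 ?add0r.
Qed.

Lemma coef_num_poly i :
  num_poly`_i = if i == 1%N then 1 else if i == 2%N then - y else 0.
Proof.
rewrite /num_poly coefB (coefCM y) coefX coefXn.
by case: i => [|[|[|i]]] /=; rewrite ?mulr0 ?mulr1 ?subr0 ?sub0r.
Qed.

Lemma den_poly_comp g : den_poly \Po g = 1 + r%:P * g + s%:P * g ^+ 2.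
Proof.
rewrite /den_poly !(comp_polyD, comp_polyM, comp_polyC) comp_polyX.
by rewrite polyC1 expr2.
Qed.

Lemma num_poly_comp g : num_poly \Po g = g - y%:P * g ^+ 2.
Proof.
by rewrite /num_poly comp_polyB comp_polyM comp_polyX comp_Xn_poly comp_polyC.
Qed.

Definition rev_eq N g := num_poly \Po g = 'X * (den_poly \Po g) %[modX N].

Lemma comp_num_den N f g : g`_0 = 0 -> f * den_poly = num_poly %[modX N] ->
  (f \Po g) * (den_poly \Po g) = num_poly \Po g %[modX N].
Proof. by move=> g0 /(eqmodX_compl g0); rewrite comp_polyM. Qed.

Lemma comp_eqX_rev_eq N f g : g`_0 = 0 -> f * den_poly = num_poly %[modX N] ->
  f \Po g = 'X %[modX N] -> rev_eq N g.
Proof.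
move=> g0 Ef EfgX; apply: eqmodX_trans (eqmodX_sym (comp_num_den g0 Ef)) _.
exact: eqmodXM (eqmodX_refl _).
Qed.

Lemma rev_eq_comp_eqX N f g : g`_0 = 0 -> f * den_poly = num_poly %[modX N] ->
  rev_eq N g -> f \Po g = 'X %[modX N].
Proof.
move=> g0 Ef Eg; apply: eqmodX_mulIr (eqmodX_trans (comp_num_den g0 Ef) Eg).
rewrite den_poly_comp !coefD coef1 !coefCM g0 coef_expr_small //.
by rewrite !mulr0 !addr0.
Qed.

Lemma rev_eq_congr N g g' : g = g' %[modX N] -> rev_eq N g' -> rev_eq N g.
Proof.
move=> Egg' Eg'; apply: eqmodX_trans (eqmodX_compr _ Egg') (eqmodX_trans Eg' _).
exact: eqmodXM (eqmodX_refl _) (eqmodX_sym (eqmodX_compr _ Egg')).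
Qed.

Lemma rev_eq_mulX N a :
  a = 1 + r%:P * 'X * a + (s%:P * 'X ^+ 2 + y%:P * 'X) * a ^+ 2 %[modX N] ->
  rev_eq N.+1 ('X * a).
Proof.
move=> Ea; rewrite /rev_eq num_poly_comp den_poly_comp.
apply: eqmodX_trans (eqmodXB (eqmodX_mulX Ea) (eqmodX_refl _)) (eqmodX_eq _).
by ring.
Qed.

Lemma rev_eq_unique (G G' : fps S) : G 0%N = 0 -> G' 0%N = 0 ->
  (forall N, rev_eq N (trunc N G)) -> (forall N, rev_eq N (trunc N G')) ->
  forall n, G n = G' n.
Proof.
move=> G0 G'0 EG EG'; elim/ltn_ind => -[_|m IHm]; first by rewrite G0 G'0.
have := eqmodXB (EG m.+2) (EG' m.+2) (ltnSn m.+1).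
rewrite !num_poly_comp !den_poly_comp.
set g := trunc _ G; set g' := trunc _ G'.
set d : {poly S} := g - g'; set h : {poly S} := g + g'.
have -> : g - y%:P * g ^+ 2 - (g' - y%:P * g' ^+ 2) = d - y%:P * (d * h).
  by rewrite /d /h; ring.
have -> : 'X * (1 + r%:P * g + s%:P * g ^+ 2)
    - 'X * (1 + r%:P * g' + s%:P * g' ^+ 2) = 'X * (r%:P * d + s%:P * (d * h)).
  by rewrite /d /h; ring.
(* At order m+1 only d_(m+1) survives: d vanishes below m+1 and h(0) = 0. *)
have d_small j : (j < m.+1)%N -> d`_j = 0.
  by move=> lt_jm; rewrite coefB !coef_trunc (ltn_trans lt_jm) // IHm // subrr.
have h0 : h`_0 = 0 by rewrite coefD !coef_trunc /= G0 G'0 addr0.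
rewrite coefB (coefCM y) coefXM /= (coefD (r%:P * d)) (coefCM r) (coefCM s).
rewrite !(coef_mul_small d_small h0) // d_small // !mulr0 subr0 addr0.
rewrite coefB !coef_trunc ltnSn.
by move/eqP; rewrite subr_eq0 => /eqP.
Qed.

Lemma rev_eq_is_rev (F G : fps S) :
  (forall N, trunc N F * den_poly = num_poly %[modX N]) ->
  G 0%N = 0 -> (forall N, rev_eq N (trunc N G)) -> is_rev F G.
Proof.
move=> EF G0 EG; split => //; apply: functional_extensionality => n.
rewrite (@fps_comp_trunc _ n.+1) // (rev_eq_comp_eqX _ (EF n.+1) (EG n.+1)) //.
  by rewrite coefX /fps_X; case: (n == 1%N).
by rewrite coef_trunc.
Qed.

Lemma is_rev_rev_eq (F G : fps S) :
  (forall N, trunc N F * den_poly = num_poly %[modX N]) ->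
  is_rev F G -> forall N, rev_eq N (trunc N G).
Proof.
move=> EF [G0 GX] N; apply: (comp_eqX_rev_eq _ (EF N)).
  by rewrite coef_trunc; case: N.
by move=> i lt_iN; rewrite -fps_comp_trunc // GX coefX /fps_X; case: (i == 1%N).
Qed.

End Reversion.

Definition rev_term (S : nzSemiRingType) (r s : S) n k j : S :=
  ('C(j, k) * 'C(n + k, j.*2) * catalan j)%:R
    * s ^+ (j - k) * r ^+ (n + k - j.*2).

Section CatalanSolution.
Variables (S : comNzRingType) (r s y : S) (N : nat).

Definition catalan_poly : {poly S} := \poly_(j < N) (catalan j)%:R.

Lemma catalan_polyE : catalan_poly = 1 + 'X * catalan_poly ^+ 2 %[modX N].
Proof.
move=> [|n] lt_nN; rewrite coefD coef1 coefXM /catalan_poly coef_poly lt_nN /=.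
  by rewrite addr0.
rewrite add0r expr2 coefM catalanS natr_sum; apply: eq_bigr => j _.
by rewrite !coef_poly natrM !ifT //; have := ltn_ord j; lia.
Qed.

Definition geom_poly : {poly S} := \poly_(i < N) r ^+ i.

(* the truncation of (1 - r x)^-(p+1) *)
Definition negbin_poly p : {poly S} := \poly_(i < N) ('C(p + i, i)%:R * r ^+ i).

Lemma coef_mul1_rX (q : {poly S}) i :
  ((1 - r%:P * 'X) * q)`_i = q`_i - (if i is k.+1 then r * q`_k else 0).
Proof.
rewrite mulrBl mul1r coefB -mulrA (coefCM r) coefXM.
by case: i => [|i] /=; rewrite ?mulr0.
Qed.

Lemma geom_polyV : (1 - r%:P * 'X) * geom_poly = 1 %[modX N].
Proof.
move=> [|i] lt_iN; rewrite coef_mul1_rX coef1 /geom_poly !coef_poly lt_iN.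
  by rewrite subr0.
by rewrite ltnW // exprS subrr.
Qed.

Lemma negbin_polyS p :
  (1 - r%:P * 'X) * negbin_poly p.+1 = negbin_poly p %[modX N].
Proof.
move=> [|i] lt_iN; rewrite coef_mul1_rX /negbin_poly !coef_poly lt_iN.
  by rewrite !addn0 !bin0 subr0.
rewrite ltnW // !addSn -[(p + i).+1]addnS binS natrD exprS; ring.
Qed.

Lemma geom_poly_exp p : geom_poly ^+ p.+1 = negbin_poly p %[modX N].
Proof.
elim: p => [|p IHp].
  by move=> i lt_iN; rewrite expr1 !coef_poly lt_iN add0n binn mul1r.
rewrite exprS; apply: eqmodX_trans (eqmodXM (eqmodX_refl _) IHp) _.
apply: eqmodX_trans (eqmodXM (eqmodX_refl _) (eqmodX_sym (negbin_polyS p))) _.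
rewrite mulrA [geom_poly * _]mulrC -[X in _ = X %[modX N]]mul1r.
exact: eqmodXM geom_polyV (eqmodX_refl _).
Qed.

Definition catalan_arg : {poly S} := 'X * (s%:P * 'X + y%:P) * geom_poly ^+ 2.

Definition catalan_sol : {poly S} := geom_poly * (catalan_poly \Po catalan_arg).

Lemma catalan_sol_eq : catalan_sol = 1 + r%:P * 'X * catalan_sol
  + (s%:P * 'X ^+ 2 + y%:P * 'X) * catalan_sol ^+ 2 %[modX N].
Proof.
set C := catalan_poly \Po catalan_arg.
have arg0 : catalan_arg`_0 = 0 by rewrite /catalan_arg -!mulrA coefXM.
have EC : C = 1 + catalan_arg * C ^+ 2 %[modX N].
  apply: eqmodX_trans (eqmodX_compl arg0 catalan_polyE) (eqmodX_eq _).
  rewrite comp_polyD comp_polyM comp_polyX !expr2 comp_polyM.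
  by rewrite -polyC1 comp_polyC.
have ECsol : C = (1 - r%:P * 'X) * catalan_sol %[modX N].
  rewrite /catalan_sol mulrA -[X in X = _ %[modX N]]mul1r.
  exact: eqmodXM (eqmodX_sym geom_polyV) (eqmodX_refl _).
have split_sol :
    catalan_sol = (1 - r%:P * 'X) * catalan_sol + r%:P * 'X * catalan_sol.
  by ring.
apply: eqmodX_trans (eqmodX_eq split_sol) _.
rewrite addrAC; apply: eqmodXD (eqmodX_refl _).
apply: eqmodX_trans (eqmodX_sym ECsol) (eqmodX_trans EC (eqmodX_eq _)).
by rewrite /catalan_arg /catalan_sol /C; ring.
Qed.

Lemma coef_catalan_sol n : (n < N)%N ->
  catalan_sol`_n = \sum_(j < N) \sum_(l < j.+1) rev_term r s n l j * y ^+ l.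
Proof.
move=> lt_nN; rewrite /catalan_sol /catalan_poly poly_def linear_sum mulr_sumr.
rewrite coef_sum.
apply: eq_bigr => j _; rewrite linearZ /= comp_Xn_poly -scalerAr coefZ.
have -> : geom_poly * catalan_arg ^+ j =
    'X^j * (s%:P * 'X + y%:P) ^+ j * geom_poly ^+ (j.*2).+1.
  by rewrite /catalan_arg !exprMn exprS -addnn exprD; ring.
rewrite (eqmodXM (eqmodX_refl _) (geom_poly_exp j.*2) lt_nN).
rewrite exprDn mulr_sumr mulr_suml coef_sum mulr_sumr; apply: eq_bigr => l _.
have le_lj : (l <= j)%N by rewrite -ltnS.
have -> : 'X^j * ((s%:P * 'X) ^+ (j - l) * y%:P ^+ l *+ 'C(j, l))
      * negbin_poly j.*2
    = ('C(j, l)%:R * s ^+ (j - l) * y ^+ l)%:P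
      * ('X^(j + (j - l)) * negbin_poly j.*2).
  by rewrite exprMn exprD !rmorphM !rmorphXn rmorph_nat -mulr_natr; ring.
rewrite coefCM coefXnM /negbin_poly /rev_term coef_poly -!addnn.
case: ltnP => [lt_n_3j|le_3j_n].
  rewrite (@bin_small (n + l) (j + j)); last by lia.
  by rewrite muln0 mul0n !mulr0 !mul0r.
rewrite ifT; last by lia.
rewrite (_ : j + j + (n - (j + (j - l))) = n + l)%N; last by lia.
rewrite (_ : n - (j + (j - l)) = n + l - (j + j))%N; last by lia.
by rewrite bin_sub ?natrM; [ring | lia].
Qed.

End CatalanSolution.

Lemma rev_term_polyC (R : nzRingType) (r s : R) n k j :
  rev_term r%:P s%:P n k j = (rev_term r s n k j)%:P.
Proof. by rewrite /rev_term !natrM !rmorphM !rmorphXn !rmorph_nat. Qed.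

Section ReverseCoefficients.
Variables (R : comNzRingType) (r s : R).

Definition rev_coef n k : R := \sum_(k <= j < n.+1) rev_term r s n k j.

Lemma coef_catalan_sol_X N n k :
  (n < N)%N -> (catalan_sol r%:P s%:P 'X N)`_n`_k = rev_coef n k.
Proof.
move=> lt_nN; rewrite coef_catalan_sol // coef_sum.
have coef_inner (j : 'I_N) :
    (\sum_(l < j.+1) rev_term r%:P s%:P n l j * 'X ^+ l)`_k
    = if (k <= j)%N then rev_term r s n k j else 0.
  rewrite coef_sum.
  under eq_bigr => l _ do rewrite rev_term_polyC coefCM coefXn mulr_natr mulrb.
  rewrite -big_mkcond /=; under eq_bigl => l do rewrite eq_sym.
  by rewrite (big_ord1_eq _ (rev_term r s n ^~ j) k) ltnS.
rewrite (eq_bigr _ (fun j _ => coef_inner j)) /rev_coef.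
rewrite (big_nat_widen _ _ _ _ _ lt_nN) big_geq_mkord [RHS]big_mkcond.
apply: eq_bigr => j _ /=; case: leqP => le_kj; rewrite ?andbT ?andbF //.
case: ltnP => // lt_nj; rewrite /rev_term (@bin_small (n + k) j.*2).
  by rewrite muln0 mul0n !mul0r.
by rewrite -addnn; lia.
Qed.

Definition rev_series : fps {poly R} :=
  fun n => if n is m.+1 then \poly_(k < m.+1) rev_coef m k else 0.

Lemma rev_series_coef m k : (rev_series m.+1)`_k = rev_coef m k.
Proof.
rewrite coef_poly; case: ltnP => // lt_mk.
by rewrite /rev_coef big_geq.
Qed.

Lemma trunc_rev_series N :
  trunc N.+1 rev_series = 'X * catalan_sol r%:P s%:P 'X N %[modX N.+1].
Proof.
move=> [|m] lt_mN; rewrite coef_trunc lt_mN coefXM //=.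
by apply/polyP => k; rewrite rev_series_coef coef_catalan_sol_X.
Qed.

Lemma rev_eq_rev_series N : rev_eq r%:P s%:P 'X N (trunc N rev_series).
Proof.
case: N => [|N]; first by [].
apply: rev_eq_congr (trunc_rev_series (N := N)) _.
by move/rev_eq_mulX: (catalan_sol_eq r%:P s%:P 'X (N := N)).
Qed.

End ReverseCoefficients.

Unset Implicit Arguments.

Theorem mainTheorem16 (R : comNzRingType) (r s : R) (F : fps {poly R}) :
  fps_mul F (fun m => if m == 0%N then 1 else if m == 1%N then r%:P
                      else if m == 2%N then s%:P else 0)
  = (fun m => if m == 1%N then 1 else if m == 2%N then - 'X else 0) ->
  (exists G : fps {poly R}, is_rev F G) /\
  forall G : fps {poly R}, is_rev F G ->
  forall n k : nat,
    (G n.+1)`_k =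
    \sum_(k <= j < n.+1)
      ('C(j, k) * 'C(n + k, j.*2) * catalan j)%:R
        * s ^+ (j - k) * r ^+ (n + k - j.*2).
Proof.
move=> EF.
have EFmodX N : trunc N F * den_poly r%:P s%:P = num_poly 'X %[modX N].
  move=> i lt_iN; have := congr1 (fun a => a i) EF.
  rewrite /= -coef_num_poly (fps_mul_trunc _ _ lt_iN) => <-.
  apply: (eqmodXM (eqmodX_refl _)) lt_iN => j lt_jN.
  by rewrite coef_trunc lt_jN coef_den_poly.
have revF := rev_eq_is_rev EFmodX (erefl _) (rev_eq_rev_series r s).
split=> [|G revG n k]; first by exists (rev_series r s).
have revG_eq : forall N, rev_eq r%:P s%:P 'X N (trunc N G).
  exact: is_rev_rev_eq EFmodX revG.
rewrite (rev_eq_unique (proj1 revG) (erefl _) revG_eq (rev_eq_rev_series r s)).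
exact: rev_series_coef.
Qed.
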